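(* Let $n\ge1$. (1) The number of linked partitions of $[n]$ is $n!$. (2) For each $k$, the number of linked partitions of $[n]$ with exactly $k$ singly covered minimal elements is the signless Stirling number of the first kind $c(n,k)$. (3) For each $k$, the number of linked partitions $\pi$ of $[n]$ with $\beta(\pi)=k$ is the Eulerian number $A(n,k)$, where $\beta(\pi)$ is the number of singly covered elements $i$ with $i\ne\min(B[i])$ plus the number of singleton blocks of $\pi$.
   Context: Two finite sets of integers $E,F$ are nearly disjoint if for every $i\in E\cap F$ either ($i=\min(E)$, $|E|>1$, $i\ne\min(F)$) or ($i=\min(F)$, $|F|>1$, $i\ne\min(E)$). A linked partition of $[n]$ is a set of nonempty subsets (blocks) of $[n]$ with union $[n]$, any two distinct blocks nearly disjoint. Every element lies in exactly one or two blocks (singly/doubly covered); for singly covered $i$, $B[i]$ denotes the block containing $i$. A singly covered minimal element is a singly covered $i$ with $i=\min(B[i])$. $c(n,k)$ is the number of permutations of $[n]$ with exactly $k$ cycles; $A(n,k)$ is the number of permutations of $[n]$ with exactly $k-1$ descents. *)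

(* The ground set [n] = {1,...,n} is represented by 'I_n
   = {0,...,n-1} via the order isomorphism i |-> i+1 (only the order of
   elements matters in all definitions below). *)
From mathcomp Require Import all_boot all_fingroup.
Set Implicit Arguments. Unset Strict Implicit. Unset Printing Implicit Defensive.

Section LinkedPartitions.
Variable n : nat.
Local Notation T := 'I_n.

Definition is_min (i : T) (E : {set T}) : bool :=
  (i \in E) && [forall j in E, (i <= j)%N].

Definition nearly_disjoint (E F : {set T}) : bool :=
  [forall i in E :&: F,
     (is_min i E && (1 < #|E|) && ~~ is_min i F) ||
     (is_min i F && (1 < #|F|) && ~~ is_min i E)].

Definition linked_partition (P : {set {set T}}) : bool :=
  [&& set0 \notin P,
      \bigcup_(B in P) B == [set: T] &
      [forall E in P, forall F in P, (E != F) ==> nearly_disjoint E F]].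

Definition cover_mult (P : {set {set T}}) (i : T) : nat :=
  #|[set B in P | i \in B]|.

Definition singly_covered (P : {set {set T}}) (i : T) : bool :=
  cover_mult P i == 1%N.

Definition sc_minimal (P : {set {set T}}) (i : T) : bool :=
  singly_covered P i && [exists B in P, (i \in B) && is_min i B].

Definition sc_nonminimal (P : {set {set T}}) (i : T) : bool :=
  singly_covered P i && [exists B in P, (i \in B) && ~~ is_min i B].

Definition num_sc_minimal (P : {set {set T}}) : nat :=
  #|[set i : T | sc_minimal P i]|.

Definition beta (P : {set {set T}}) : nat :=
  #|[set i : T | sc_nonminimal P i]| + #|[set B in P | #|B| == 1%N]|.

Definition num_cycles (s : {perm T}) : nat := #|porbits s|.

(* descents: positions i (1 <= i < n in 1-based indexing) with s(i) > s(i+1) *)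
Definition num_descents (s : {perm T}) : nat :=
  #|[set i : T | [exists j : T, (val j == i.+1) && (s j < s i)%N]]|.

End LinkedPartitions.

Definition stirling1 (n k : nat) : nat :=
  #|[set s : {perm 'I_n} | num_cycles s == k]|.

Definition eulerian (n k : nat) : nat :=
  #|[set s : {perm 'I_n} | (num_descents s).+1 == k]|.

From mathcomp Require Import all_boot all_fingroup.
Set Implicit Arguments. Unset Strict Implicit. Unset Printing Implicit Defensive.

(* A linked partition is determined by its parent map [a]: an element that is a
   non-minimal member of some block (by near-disjointness there is at most one
   such block) is sent to the minimum of that block, every other element to
   itself.  This identifies the linked partitions of [n] with the subexceedant
   maps ([a j <= j]), i.e. with the forests on [n] whose roots are the fixed
   points of [a]: the blocks are the sets {i} u a^-1(i) for the roots and the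
   inner vertices [i].  Singly covered minimal elements become the fixed points
   of [a], and beta becomes the number of leaves.  Two bijections with
   permutations finish the proof: the product of the transpositions (j a_j)
   has one cycle per fixed point of [a], and the forest in which the value at
   position p hangs below the value at the nearest position to the left of p
   holding a smaller value has one leaf per descent plus one for the last
   position. *)
Lemma card_pred_bij (aT rT : finType) (f : aT -> rT) (A : {set aT})
    (B : {set rT}) (p : pred aT) (q : pred rT) :
  {in A &, injective f} -> f @: A = B -> {in A, forall x, q (f x) = p x} ->
  #|[set x in A | p x]| = #|[set y in B | q y]|.
Proof.
move=> f_inj fAB qf; rewrite -(card_in_imset (f := f)); last first.
  by move=> x y; rewrite !inE => /andP[xA _] /andP[yA _]; apply: f_inj.
congr #|pred_of_set _|; apply/setP=> y; rewrite inE -fAB.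
apply/imsetP/andP=> [[x] | [/imsetP[x xA ->] qfx]].
  by rewrite inE => /andP[xA px] ->; rewrite imset_f // qf.
by exists x; rewrite // inE xA -qf.
Qed.

Lemma porbit_fix (T : finType) (s : {perm T}) x : s x = x -> porbit s x = [set x].
Proof.
move=> sx; apply/setP=> y; rewrite inE; apply/idP/eqP => [/porbitP[i ->] | ->].
  by rewrite permX_fix.
exact: porbit_id.
Qed.

Lemma card_porbits1 (T : finType) : #|porbits (1 : {perm T})| = #|T|.
Proof.
rewrite /porbits (eq_imset _ (fun x => porbit_fix (perm1 x))).
exact: card_imset set1_inj.
Qed.

Section SubexceedantCode.
Variable n : nat.
Local Notation T := 'I_n.
Implicit Types (a : {ffun T -> T}) (i j : T) (P : {set {set T}}) (B E F : {set T}).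

Lemma is_min_uniq i i' B : is_min i B -> is_min i' B -> i = i'.
Proof.
case/andP=> iB /forall_inP mi; case/andP=> i'B /forall_inP mi'.
by apply/val_inj/eqP; rewrite eqn_leq mi // mi'.
Qed.

Definition subexceedant : {set {ffun T -> T}} := [set a : {ffun T -> T} | [forall j, a j <= j]].

Lemma subexceedant_le a : a \in subexceedant -> forall j, a j <= j.
Proof. by rewrite inE => /forallP. Qed.

Definition code_block a i : {set T} := [set j | (j == i) || (a j == i)].
Definition childless a i : bool := [forall j, (a j == i) ==> (j == i)].
Definition block_root a i : bool := (a i == i) || ~~ childless a i.
Definition lpart_of_code a : {set {set T}} :=
  code_block a @: [set i | block_root a i].

Lemma code_block_self a i : i \in code_block a i.
Proof. by rewrite inE eqxx. Qed.

Lemma mem_code_block_parent a j : j \in code_block a (a j).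
Proof. by rewrite inE eqxx orbT. Qed.

Lemma block_root_parent a j : block_root a (a j).
Proof.
rewrite /block_root; have [e | ajj] := eqVneq (a j) j; first by rewrite !e eqxx.
apply/orP; right; apply/forallPn; exists j; by rewrite negb_imply eqxx eq_sym.
Qed.

Lemma card_code_block_gt1 a i : (1 < #|code_block a i|) = ~~ childless a i.
Proof.
apply/idP/idP => [gt1 | /forallPn[j]]; last first.
  rewrite negb_imply => /andP[/eqP aj ji].
  rewrite (cardsD1 i) code_block_self ltnS card_gt0; apply/set0Pn.
  by exists j; rewrite !inE ji aj eqxx orbT.
apply: contraTN gt1 => /forallP noch; rewrite -leqNgt -(cards1 i).
by apply/subset_leq_card/subsetP=> j; rewrite !inE => /orP[// | /(implyP (noch j))].
Qed.

Lemma card_code_block_eq1 a i : (#|code_block a i| == 1) = childless a i.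
Proof.
have nonempty : 0 < #|code_block a i| by apply/card_gt0P; exists i; apply: code_block_self.
by rewrite eqn_leq nonempty andbT leqNgt card_code_block_gt1 negbK.
Qed.

Section Subexceedant.
Variable a : {ffun T -> T}.
Hypothesis aS : a \in subexceedant.

Lemma is_min_code_block i : is_min i (code_block a i).
Proof.
rewrite /is_min code_block_self; apply/forall_inP=> j; rewrite inE.
by case/orP=> /eqP <-; rewrite ?leqnn ?subexceedant_le.
Qed.

Lemma code_block_inj : injective (code_block a).
Proof. by move=> i i' e; apply: is_min_uniq (is_min_code_block i) _; rewrite e is_min_code_block. Qed.

Lemma linked_lpart_of_code : linked_partition (lpart_of_code a).
Proof.
apply/and3P; split.
- by apply/imsetP=> -[i _ /setP/(_ i)]; rewrite code_block_self inE.
- rewrite eqEsubset subsetT /=; apply/subsetP=> j _; apply/bigcupP.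
  by exists (code_block a (a j)); rewrite ?mem_code_block_parent ?imset_f ?inE ?block_root_parent.
apply/forall_inP=> E /imsetP[i]; rewrite inE => ri ->.
apply/forall_inP=> F /imsetP[i']; rewrite inE => ri' ->.
apply/implyP=> neq; have ii' : i != i' by apply: contraNneq neq => ->.
apply/forall_inP=> x; rewrite !inE.
have child_root k k' : k != k' -> block_root a k -> a k = k' ->
    is_min k (code_block a k) && (1 < #|code_block a k|) && ~~ is_min k (code_block a k').
  move=> kk' rk akk'; rewrite is_min_code_block card_code_block_gt1.
  move: rk; rewrite /block_root akk' eq_sym (negPf kk') /= => -> /=.
  by apply: contra kk' => /is_min_uniq/(_ (is_min_code_block k')) ->.
case/andP=> /orP[/eqP xi | /eqP axi] /orP[/eqP xi' | /eqP axi'].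
- by rewrite -xi -xi' eqxx in ii'.
- by move: axi'; rewrite xi => /(child_root _ _ ii' ri) ->.
- by move: axi; rewrite xi' eq_sym in ii' * => /(child_root _ _ ii' ri') ->; rewrite orbT.
- by rewrite -axi -axi' eqxx in ii'.
Qed.

End Subexceedant.

Definition lp_parent P j : T :=
  odflt j [pick i | (i != j) && [exists B in P, (j \in B) && is_min i B]].
Definition code_of_lpart P : {ffun T -> T} := [ffun j => lp_parent P j].

Lemma code_of_lpartK : {in subexceedant, cancel lpart_of_code code_of_lpart}.
Proof.
move=> a aS; apply/ffunP=> j; rewrite ffunE /lp_parent; case: pickP => [i | no_parent] /=.
  case/andP=> ij /exists_inP[_ /imsetP[i0 _ ->] /andP[jB /is_min_uniq mi]].
  by move: jB; rewrite -(mi _ (is_min_code_block aS i0)) inE eq_sym (negPf ij) => /eqP.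
have [-> // | ajj] := eqVneq (a j) j; move: (no_parent (a j)); rewrite ajj.
rewrite (_ : [exists B in _, _]) //; apply/exists_inP; exists (code_block a (a j)).
  by rewrite imset_f // inE block_root_parent.
by rewrite mem_code_block_parent is_min_code_block.
Qed.

Section LinkedPartition.
Variable P : {set {set T}}.
Hypothesis lpP : linked_partition P.

Lemma lp_nearly_disjoint E F : E \in P -> F \in P -> E != F -> nearly_disjoint E F.
Proof.
case/and3P: lpP => _ _ /forall_inP nd EP FP.
by move: (nd E EP) => /forall_inP/(_ F FP)/implyP.
Qed.

Lemma lp_eq_nonmin E F j : E \in P -> F \in P -> j \in E -> j \in F ->
  ~~ is_min j E -> ~~ is_min j F -> E = F.
Proof.
move=> EP FP jE jF nE nF; apply/eqP; apply: contraTT isT => EF.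
move: (lp_nearly_disjoint EP FP EF) => /forall_inP/(_ j).
by rewrite inE jE jF (negPf nE) (negPf nF) => /(_ isT).
Qed.

Lemma lp_eq_min E F i : E \in P -> F \in P -> is_min i E -> is_min i F -> E = F.
Proof.
move=> EP FP mE mF; apply/eqP; apply: contraTT isT => EF.
move: (lp_nearly_disjoint EP FP EF) => /forall_inP/(_ i).
by rewrite inE (andP mE).1 (andP mF).1 mE mF !andbF => /(_ isT).
Qed.

Lemma lp_block_min B : B \in P -> exists i, is_min i B.
Proof.
case/and3P: lpP => B0 _ _ BP; have [x xB] : exists x, x \in B.
  by apply/set0Pn; apply: contraNneq B0 => <-.
case: (arg_minnP (fun i : T => val i) xB) => m mB m_min.
by exists m; apply/andP; split => //; apply/forall_inP.
Qed.

Lemma lp_cover j : exists2 B, B \in P & j \in B.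
Proof.
case/and3P: lpP => _ /eqP cover _.
have /bigcupP[B BP jB] : j \in \bigcup_(B in P) B by rewrite cover inE.
by exists B.
Qed.

Lemma lp_parentE B j i : B \in P -> j \in B -> is_min i B -> i != j -> lp_parent P j = i.
Proof.
move=> BP jB mi ij; rewrite /lp_parent; case: pickP => [i' | no_parent] /=.
  case/andP=> i'j /exists_inP[B' B'P /andP[jB' mi']].
  have nmin i0 B0 : is_min i0 B0 -> i0 != j -> ~~ is_min j B0.
    by move=> m0; apply: contra => /(is_min_uniq m0) ->.
  have BB' := lp_eq_nonmin BP B'P jB jB' (nmin _ _ mi ij) (nmin _ _ mi' i'j).
  by rewrite BB' in mi; apply: is_min_uniq mi' mi.
move: (no_parent i); rewrite ij (_ : [exists B in _, _]) //.
by apply/exists_inP; exists B; rewrite ?jB.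
Qed.

Lemma lp_parentP j : lp_parent P j != j ->
  exists2 B, B \in P & (j \in B) && is_min (lp_parent P j) B.
Proof.
rewrite /lp_parent; case: pickP => [i /andP[_ /exists_inP[B BP jB]] _ | _] /=.
  by exists B.
by rewrite eqxx.
Qed.

Lemma code_of_lpart_subexceedant : code_of_lpart P \in subexceedant.
Proof.
rewrite inE; apply/forallP=> j; rewrite ffunE.
have [-> // | /lp_parentP[B _ /andP[jB /andP[_ /forall_inP]]]] := eqVneq (lp_parent P j) j.
exact.
Qed.

Lemma lp_block_code B i : B \in P -> is_min i B -> B = code_block (code_of_lpart P) i.
Proof.
move=> BP mi; apply/setP=> x; rewrite inE ffunE; apply/idP/idP.
  move=> xB; have [// | xi] := eqVneq x i.
  by rewrite (lp_parentE BP xB mi) 1?eq_sym // eqxx orbT.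
case/orP=> [/eqP -> | /eqP px]; first by case/andP: mi.
have [pxx | px_x] := eqVneq (lp_parent P x) x; first by rewrite -pxx px; case/andP: mi.
have [B' B'P /andP[xB']] := lp_parentP px_x.
by rewrite px => /(lp_eq_min BP B'P mi) ->.
Qed.

Lemma lp_block_root B i : B \in P -> is_min i B -> block_root (code_of_lpart P) i.
Proof.
move=> BP mi; rewrite /block_root -card_code_block_gt1 -(lp_block_code BP mi) ffunE.
have [// | pi_i] := eqVneq (lp_parent P i) i.
have [B' B'P /andP[iB' mi']] := lp_parentP pi_i.
have BB' : B != B'.
  by apply: contraNneq pi_i => BB'; rewrite -BB' in mi'; rewrite -(is_min_uniq mi mi').
move: (lp_nearly_disjoint BP B'P BB') => /forall_inP/(_ i).
by rewrite inE iB' (andP mi).1 mi /= andbF orbF => /(_ isT) /andP[->].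
Qed.

Lemma lpart_of_codeK : lpart_of_code (code_of_lpart P) = P.
Proof.
apply/setP=> B; apply/imsetP/idP => [[i] | BP]; last first.
  have [i mi] := lp_block_min BP.
  by exists i; rewrite ?inE ?(lp_block_root BP mi) // (lp_block_code BP mi).
rewrite inE => ri ->.
suff [B' B'P mi] : exists2 B', B' \in P & is_min i B' by rewrite -(lp_block_code B'P mi).
move: ri; rewrite /block_root ffunE; case/orP=> [/eqP pii | /forallPn[x]].
  have [B' B'P iB'] := lp_cover i; have [m mm] := lp_block_min B'P.
  have [<- | mi] := eqVneq m i; first by exists B'.
  by move: (lp_parentE B'P iB' mm mi); rewrite pii => im; rewrite im eqxx in mi.
rewrite negb_imply ffunE => /andP[/eqP px xi].
have [|B' B'P /andP[_]] := lp_parentP (j := x); first by rewrite px eq_sym.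
by rewrite px; exists B'.
Qed.

End LinkedPartition.

Lemma lpart_of_code_bij :
  lpart_of_code @: subexceedant = [set P | linked_partition P].
Proof.
apply/setP=> P; rewrite inE; apply/imsetP/idP => [[a aS ->] | lpP].
  exact: linked_lpart_of_code.
by exists (code_of_lpart P); rewrite ?code_of_lpart_subexceedant ?lpart_of_codeK.
Qed.

Lemma card_linked_partitions : #|[set P : {set {set T}} | linked_partition P]| = #|subexceedant|.
Proof.
by rewrite -lpart_of_code_bij card_in_imset //; apply: can_in_inj code_of_lpartK.
Qed.

Lemma card_linked_partition (p : pred {set {set T}}) (p' : pred {ffun T -> T}) :
  {in subexceedant, forall a, p (lpart_of_code a) = p' a} ->
  #|[set P | linked_partition P && p P]| = #|[set a in subexceedant | p' a]|.
Proof.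
move=> pp'; rewrite (card_pred_bij _ lpart_of_code_bij pp').
- by apply: eq_card => P; rewrite !inE.
- exact: can_in_inj code_of_lpartK.
Qed.

Section Statistics.
Variable a : {ffun T -> T}.
Hypothesis aS : a \in subexceedant.
Local Notation LP := (lpart_of_code a).

Lemma cover_mult_lpart_of_code j : cover_mult LP j = (a j != j) + block_root a j.
Proof.
have blocks_j : [set B in LP | j \in B] =
          code_block a @: [set i | block_root a i && (j \in code_block a i)].
  apply/setP=> B; rewrite inE; apply/andP/imsetP => [[/imsetP[i ri ->] jB] | [i]].
    by exists i; rewrite // inE jB andbT; rewrite inE in ri.
  by rewrite inE => /andP[ri jB] ->; split; rewrite // imset_f ?inE.
rewrite /cover_mult blocks_j card_imset; last exact: code_block_inj.
rewrite (cardsD1 j) !inE eqxx andbT addnC; congr (_ + _).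
have [ajj | ajj] := eqVneq (a j) j.
  apply/eqP; rewrite cards_eq0; apply/eqP/setP=> i; rewrite !inE ajj orbb eq_sym.
  by case: eqVneq; rewrite /= ?andbF.
rewrite /= -(cards1 (a j)); apply: eq_card => i; rewrite !inE.
have [-> | iaj] := eqVneq i (a j); first by rewrite ajj block_root_parent orbT.
by rewrite orbF eq_sym; case: eqVneq; rewrite /= ?andbF.
Qed.

Lemma singly_covered_lpart_of_code j : singly_covered LP j = (a j == j) || childless a j.
Proof.
rewrite /singly_covered cover_mult_lpart_of_code /block_root.
by case: (a j == j); case: (childless a j).
Qed.

Lemma lpart_of_code_min_block j :
  [exists B in LP, (j \in B) && is_min j B] = block_root a j.
Proof.
apply/exists_inP/idP => [[_ /imsetP[i ri ->] /andP[_ /is_min_uniq ij]] | rj].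
  by rewrite (ij _ (is_min_code_block aS i)); rewrite inE in ri.
exists (code_block a j); first by rewrite imset_f ?inE.
by rewrite code_block_self is_min_code_block.
Qed.

Lemma lpart_of_code_nonmin_block j :
  [exists B in LP, (j \in B) && ~~ is_min j B] = (a j != j).
Proof.
apply/exists_inP/idP => [[_ /imsetP[i _ ->]] | ajj].
  rewrite inE => /andP[/orP[/eqP -> | /eqP <-]]; first by rewrite is_min_code_block.
  by apply: contra => /eqP {1}<-; apply: is_min_code_block.
exists (code_block a (a j)); first by rewrite imset_f ?inE ?block_root_parent.
rewrite mem_code_block_parent.
by apply: contra ajj => /is_min_uniq/(_ (is_min_code_block aS _)) <-.
Qed.

Lemma num_sc_minimal_lpart_of_code : num_sc_minimal LP = #|[set j | a j == j]|.
Proof.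
apply: eq_card => j; rewrite !inE /sc_minimal singly_covered_lpart_of_code.
by rewrite lpart_of_code_min_block /block_root; case: (a j == j); case: (childless a j).
Qed.

Lemma beta_lpart_of_code : beta LP = #|[set j | childless a j]|.
Proof.
have singletons : [set B in LP | #|B| == 1] =
          code_block a @: [set i | (a i == i) && childless a i].
  apply/setP=> B; rewrite inE; apply/andP/imsetP => [[/imsetP[i ri ->] ] | [i]].
    rewrite card_code_block_eq1 => chi; exists i => //.
    by move: ri; rewrite !inE /block_root chi orbF andbT.
  by rewrite inE => /andP[aii chi] ->; rewrite imset_f ?inE /block_root ?aii ?card_code_block_eq1.
rewrite /beta singletons card_imset; last exact: code_block_inj.
rewrite -(cardsID [set j | a j == j] [set j | childless a j]) addnC; congr (_ + _).
  by apply: eq_card => j; rewrite !inE andbC.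
apply: eq_card => j; rewrite !inE /sc_nonminimal singly_covered_lpart_of_code.
by rewrite lpart_of_code_nonmin_block; case: (a j == j); case: (childless a j).
Qed.

End Statistics.

End SubexceedantCode.

Section CodePerm.
Variable n : nat.
Local Notation T := 'I_n.
Implicit Types (a b : {ffun T -> T}).

Fixpoint code_perm_upto a m : {perm T} :=
  if m is m'.+1 then
    if insub m' is Some j then (tperm j (a j) * code_perm_upto a m')%g else code_perm_upto a m'
  else 1.

Definition code_perm a := code_perm_upto a n.

Lemma code_perm_upto_S a m (j : T) :
  val j = m -> code_perm_upto a m.+1 = (tperm j (a j) * code_perm_upto a m)%g.
Proof. by move=> <- /=; rewrite valK. Qed.

Section Subexceedant.
Variable a : {ffun T -> T}.
Hypothesis aS : a \in subexceedant n.

Lemma code_perm_upto_fix m (x : T) : m <= x -> code_perm_upto a m x = x.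
Proof.
elim: m => [|m IHm] mx; first by rewrite perm1.
have [j jm] : {j : T | val j = m} by exists (Ordinal (ltn_trans mx (ltn_ord x))).
rewrite (code_perm_upto_S _ jm) permM tpermD ?IHm ?(ltnW mx) //.
  by apply: contraTneq mx => <-; rewrite jm ltnn.
by apply: contraTneq mx => <-; rewrite -ltnNge ltnS -jm subexceedant_le.
Qed.

Lemma card_porbits_code_perm_upto m : m <= n ->
  #|porbits (code_perm_upto a m)| + #|[set j : T | (j < m) && (a j != j)]| = n.
Proof.
elim: m => [_ | m IHm mn].
  by rewrite card_porbits1 card_ord (_ : [set j | _] = set0) ?cards0 ?addn0 //; apply/setP.
have [j jm] : {j : T | val j = m} by exists (Ordinal mn).
have moved : #|[set k : T | (k < m.+1) && (a k != k)]|
             = #|[set k : T | (k < m) && (a k != k)]| + (a j != j).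
  rewrite (cardsD1 j) !inE jm ltnSn /= addnC; congr (#|pred_of_set _| + _).
  apply/setP=> k; rewrite !inE ltnS leq_eqVlt -jm (inj_eq val_inj).
  by case: eqVneq => [-> | ]; rewrite ?jm ?ltnn ?andbF.
have := porbits_mul_tperm (code_perm_upto a m) j (a j).
rewrite porbit_sym porbit_fix ?code_perm_upto_fix ?jm // inE (eq_sym j).
rewrite (code_perm_upto_S _ jm) moved; have IH := IHm (ltnW mn).
case: (a j == j) => /=; rewrite ?addn0.
  by move=> ->; exact: IH.
by move/eqP; rewrite -[1.*2]/(1 + 1) addnA eqn_add2r addnA addnAC => /eqP ->.
Qed.

Lemma card_porbits_code_perm : #|porbits (code_perm a)| = #|[set j | a j == j]|.
Proof.
have := card_porbits_code_perm_upto (leqnn n).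
rewrite -[n in _ = n]card_ord -(cardsC [set j | a j == j]).
rewrite (_ : [set j : T | _ && _] = ~: [set j | a j == j]) => [/addIn // | ].
by apply/setP=> j; rewrite !inE ltn_ord.
Qed.

End Subexceedant.

Lemma code_perm_inj : {in subexceedant n &, injective code_perm}.
Proof.
move=> a b aS bS.
suff agree m : m <= n -> code_perm_upto a m = code_perm_upto b m ->
    forall j : T, j < m -> a j = b j.
  by move=> ab; apply/ffunP=> j; apply: agree (ltn_ord j).
elim: m => [// | m IHm] mn ab k km.
have [j jm] : {j : T | val j = m} by exists (Ordinal mn).
(* [code_perm_upto a m.+1] maps [a j] to [j], so it determines [a j] *)
have abj : a j = b j.
  apply: (@perm_inj _ (code_perm_upto a m.+1)).
  by rewrite {2}ab !(code_perm_upto_S _ jm) !permM !tpermR !code_perm_upto_fix ?jm.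
move: ab; rewrite !(code_perm_upto_S _ jm) abj => /mulgI ab.
move: km; rewrite ltnS leq_eqVlt -jm => /orP[/eqP/val_inj -> // | km].
by apply: (IHm (ltnW mn) ab); rewrite -jm.
Qed.

End CodePerm.

Section ForestCode.
Variable n : nat.
Local Notation T := 'I_n.
Implicit Types (s t : {perm T}) (p q : T).

Definition prev_smaller s p q : bool :=
  [&& q < p, s q < s p & [forall r : T, (q < r < p) ==> (s p < s r)]].

Definition forest_code s : {ffun T -> T} :=
  [ffun v => if [pick q | prev_smaller s ((s^-1)%g v) q] is Some q then s q else v].

Definition ascent s p : bool := [exists p' : T, (val p' == p.+1) && (s p < s p')].

Lemma forest_code_perm s p :
  forest_code s (s p) = if [pick q | prev_smaller s p q] is Some q then s q else s p.
Proof. by rewrite ffunE permK. Qed.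

Lemma prev_smaller_inj s p q1 q2 : prev_smaller s p q1 -> prev_smaller s p q2 -> q1 = q2.
Proof.
wlog q12 : q1 q2 / q1 <= q2 => [sym | ].
  by case: (leqP q1 q2) => [|/ltnW] q12 ps1 ps2; [apply: sym | apply/esym/sym].
case/and3P=> _ _ /forallP between /and3P[q2p sq2 _].
case: ltngtP q12 => // [q12 _ | /val_inj //].
by move: (between q2); rewrite q12 q2p ltnNge (ltnW sq2).
Qed.

Lemma prev_smaller_exists s p q0 : q0 < p -> s q0 < s p -> exists q, prev_smaller s p q.
Proof.
move=> q0p sq0; have left_smaller : (q0 < p) && (s q0 < s p) by rewrite q0p sq0.
case: (arg_maxnP (P := fun q : T => (q < p) && (s q < s p)) val left_smaller).
move=> q /andP[qp sq] q_max.
exists q; rewrite /prev_smaller qp sq; apply/forallP=> r; apply/implyP=> /andP[qr rp].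
rewrite ltnNge leq_eqVlt negb_or; apply/andP; split.
  by apply: contraTneq rp => /val_inj/perm_inj ->; rewrite ltnn.
by apply: contraTN qr => srp; rewrite -leqNgt; apply: q_max; rewrite rp.
Qed.

Lemma forest_code_subexceedant s : forest_code s \in subexceedant n.
Proof.
rewrite inE; apply/forallP=> v; rewrite ffunE.
by case: pickP => [q /and3P[_ + _] | //]; rewrite permKV => /ltnW.
Qed.

Lemma forest_code_parent s p' p :
  (forest_code s (s p') == s p) && (p' != p) = prev_smaller s p' p.
Proof.
rewrite forest_code_perm; case: pickP => [q psq | none]; rewrite (inj_eq perm_inj).
  apply/andP/idP => [[/eqP <- //] | psp].
  rewrite (prev_smaller_inj psq psp); split => //.
  by case/and3P: psp => pp' _ _; apply: contraTneq pp' => ->; rewrite ltnn.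
by rewrite none andbN.
Qed.

Lemma childless_forest_code s p :
  childless (forest_code s) (s p) = ~~ [exists p', prev_smaller s p' p].
Proof.
apply/forallP/existsPn => [noch p' | no_child v].
  rewrite -forest_code_parent negb_and negbK -implybE.
  by rewrite -[p' == p](inj_eq (@perm_inj _ s)); apply: noch.
apply/implyP=> /eqP pv; apply: contraTT (no_child ((s^-1)%g v)) => vsp.
rewrite negbK -forest_code_parent permKV pv eqxx /=.
by apply: contra vsp => /eqP <-; rewrite permKV.
Qed.

Lemma has_prev_smaller s p : [exists p', prev_smaller s p' p] = ascent s p.
Proof.
apply/existsP/existsP => [[p' /and3P[pp' sp /forallP between]] | [p' /andP[/eqP p'p sp]]].
  case: (ltngtP (val p') p.+1) pp' => // [p'p _ | p'p _]; last by exists p'; rewrite p'p eqxx.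
  have p1n : p.+1 < n by apply: ltn_trans p'p (ltn_ord p').
  exists (Ordinal p1n); rewrite eqxx /=.
  by apply: ltn_trans sp (implyP (between (Ordinal p1n)) _); rewrite /= ltnSn.
exists p'; rewrite /prev_smaller p'p ltnSn sp; apply/forall_inP=> r.
by rewrite ltnS => /andP[pr]; rewrite leqNgt pr.
Qed.

Lemma forest_code_neq s t (i : T) :
  (forall q, q < i -> s q = t q) -> s i < t i -> forest_code s (t i) != forest_code t (t i).
Proof.
move=> agree sti; set p' := (s^-1)%g (t i).
have sp' : s p' = t i by rewrite permKV.
have ip' : i < p'.
  case: ltngtP => // [p'i | /val_inj p'i]; last by rewrite -sp' p'i ltnn in sti.
  by move: (agree _ p'i); rewrite sp' => /perm_inj p'_i; rewrite p'_i ltnn in p'i.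
have [q' psq'] : exists q', prev_smaller s p' q'.
  by apply: (prev_smaller_exists ip'); rewrite sp'.
have iq' : i <= q'.
  rewrite leqNgt; apply/negP=> q'i; case/and3P: psq' => _ _ /forallP/(_ i).
  by rewrite q'i ip' /= sp' ltnNge (ltnW sti).
rewrite -{1}sp' !forest_code_perm; case: pickP => [q'' psq'' | /(_ q')].
  rewrite -(prev_smaller_inj psq' psq'').
  case: pickP => [q /and3P[qi _ _] | _].
    by rewrite -agree // (inj_eq perm_inj); apply: contraTneq qi => <-; rewrite -leqNgt.
  rewrite -sp' (inj_eq perm_inj); case/and3P: psq' => q'p' _ _.
  by apply: contraTneq q'p' => ->; rewrite ltnn.
by rewrite psq'.
Qed.

Lemma forest_code_inj : injective forest_code.
Proof.
move=> s t st; apply/permP=> x; apply/eqP; apply: contraT => sxt.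
case: (arg_minnP (P := fun i : T => s i != t i) val sxt) => i sti i_min.
have agree q : q < i -> s q = t q.
  by move=> qi; apply/eqP; apply: contraTT qi => /i_min; rewrite -leqNgt.
case: (ltngtP (s i) (t i)) => [lt | gt | /val_inj eq]; last by rewrite eq eqxx in sti.
  by move: (forest_code_neq agree lt); rewrite st eqxx.
have agree' q : q < i -> t q = s q by move/agree.
by move: (forest_code_neq agree' gt); rewrite st eqxx.
Qed.

Lemma exists_next_pos (P : pred T) p (p1n : p.+1 < n) :
  [exists p' : T, (val p' == p.+1) && P p'] = P (Ordinal p1n).
Proof.
apply/existsP/idP => [[p' /andP[/eqP p'p]] | ]; last by exists (Ordinal p1n); rewrite eqxx.
by rewrite (_ : p' = Ordinal p1n) //; apply: val_inj.
Qed.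

Lemma no_next_pos (P : pred T) p : p.+1 = n -> ~~ [exists p' : T, (val p' == p.+1) && P p'].
Proof.
by move=> pn; apply/existsP=> -[p' /andP[/eqP p'p _]]; move: (ltn_ord p'); rewrite p'p pn ltnn.
Qed.

Lemma card_not_ascent s : 0 < n -> #|[set p | ~~ ascent s p]| = (num_descents s).+1.
Proof.
move=> n_gt0; have last_lt : n.-1 < n by rewrite ltn_predL.
rewrite (cardsD1 (Ordinal last_lt)) inE no_next_pos ?prednK // add1n; congr S.
apply: eq_card => p; rewrite !inE; have [-> | p_last] := eqVneq p (Ordinal last_lt).
  by apply/esym/negbTE/no_next_pos; rewrite /= prednK.
have p1n : p.+1 < n.
  have p_n1 : (p : nat) != n.-1 by apply: contra p_last => /eqP p_n1; apply/eqP/val_inj.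
  by rewrite -ltn_predRL ltn_neqAle p_n1 -ltnS prednK ?ltn_ord.
rewrite /ascent !exists_next_pos /= -leqNgt leq_eqVlt val_eqE (inj_eq perm_inj).
by rewrite -val_eqE /= gtn_eqF.
Qed.

Lemma card_childless_forest_code s :
  0 < n -> #|[set v | childless (forest_code s) v]| = (num_descents s).+1.
Proof.
move=> n_gt0; rewrite -card_not_ascent // -[RHS](card_imset _ (@perm_inj _ s)).
apply: eq_card => v; have [p ->] : exists p, v = s p by exists ((s^-1)%g v); rewrite permKV.
by rewrite inE childless_forest_code has_prev_smaller mem_imset ?inE //; apply: perm_inj.
Qed.

End ForestCode.

Section Counting.
Variable n : nat.

Lemma card_subexceedant : #|subexceedant n| = n`!.
Proof.
apply/eqP; rewrite -card_Sn eqn_leq; apply/andP; split.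
  by rewrite -(card_in_imset (@code_perm_inj n)) max_card.
rewrite -(card_imset _ (@forest_code_inj n)); apply/subset_leq_card/subsetP.
by move=> _ /imsetP[s _ ->]; apply: forest_code_subexceedant.
Qed.

Lemma code_perm_bij : [set code_perm a | a in subexceedant n] = [set: {perm 'I_n}].
Proof.
apply/eqP; rewrite eqEcard subsetT cardsT card_Sn -card_subexceedant.
by rewrite (card_in_imset (@code_perm_inj n)) leqnn.
Qed.

Lemma forest_code_bij : [set forest_code s | s in [set: {perm 'I_n}]] = subexceedant n.
Proof.
apply/eqP; rewrite eqEcard card_subexceedant card_imset; last exact: forest_code_inj.
rewrite cardsT card_Sn leqnn andbT.
by apply/subsetP=> _ /imsetP[s _ ->]; apply: forest_code_subexceedant.
Qed.

Lemma card_subexceedant_fixpoints k :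
  #|[set a in subexceedant n | #|[set j | a j == j]| == k]| = stirling1 n k.
Proof.
rewrite (card_pred_bij (q := fun s => num_cycles s == k) _ (code_perm_bij)).
- by apply: eq_card => s; rewrite !inE.
- exact: code_perm_inj.
- by move=> a aS; rewrite /num_cycles card_porbits_code_perm.
Qed.

Lemma card_subexceedant_leaves k : 0 < n ->
  #|[set a in subexceedant n | #|[set j | childless a j]| == k]| = eulerian n k.
Proof.
move=> n_gt0; rewrite -(card_pred_bij (p := fun s => (num_descents s).+1 == k) _ forest_code_bij).
- by apply: eq_card => s; rewrite !inE.
- by move=> s t _ _; apply: forest_code_inj.
- by move=> s _; rewrite card_childless_forest_code.
Qed.

End Counting.

Theorem corollary3p5 (n : nat) (hn : (1 <= n)%N) :
  #|[set P : {set {set 'I_n}} | linked_partition P]| = n`!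
  /\ (forall k : nat,
        #|[set P : {set {set 'I_n}} | linked_partition P && (num_sc_minimal P == k)]|
        = stirling1 n k)
  /\ (forall k : nat,
        #|[set P : {set {set 'I_n}} | linked_partition P && (beta P == k)]|
        = eulerian n k).
Proof.
split; [|split] => [|k|k].
- by rewrite card_linked_partitions card_subexceedant.
- rewrite (card_linked_partition (p' := fun a => #|[set j | a j == j]| == k)).
    exact: card_subexceedant_fixpoints.
  by move=> a aS; rewrite num_sc_minimal_lpart_of_code.
- rewrite (card_linked_partition (p' := fun a => #|[set j | childless a j]| == k)).
    exact: card_subexceedant_leaves.
  by move=> a aS; rewrite beta_lpart_of_code.
Qed.
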